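(* Let $F$ be a commutative field, $n\ge 3$, and let $K$ be a linear complex of planes in $\mathrm{PG}(n,F)$ having no singular line. Then $n$ is even. Moreover, for each hyperplane $H$ of $\mathrm{PG}(n,F)$, the set $\mathcal F_H$ of all lines whose polar hyperplane (with respect to $K$) is $H$ is a line spread of $H$.
   Context: A linear complex of planes of $\mathrm{PG}(n,F)$ is the set of planes whose Plücker image ($F(v_0\wedge v_1\wedge v_2)$ for a basis $v_0,v_1,v_2$ of the corresponding 3-dimensional subspace of $F^{n+1}$) lies in a fixed hyperplane of $\mathbb P(\bigwedge^{3}F^{n+1})$. A line $\ell$ is singular for $K$ if every plane through $\ell$ belongs to $K$; for a non-singular line $\ell$ there is a unique hyperplane $E$ (the polar hyperplane of $\ell$) such that a plane through $\ell$ belongs to $K$ iff it is contained in $E$. A line spread of a projective space is a set of lines such that each point lies on exactly one of them. *)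

(* Projective space PG(m-1,F) is modelled by F^m = 'rV[F]_m;
   a projective subspace of projective dimension d is the row space of a
   square matrix P : 'M[F]_m with \rank P = d+1 (mxalgebra). *)
From HB Require Import structures.
From mathcomp Require Import all_boot all_order all_algebra.
Set Implicit Arguments. Unset Strict Implicit. Unset Printing Implicit Defensive.
Import GRing.Theory.
Local Open Scope ring_scope.

Definition plucker (F : fieldType) (m : nat) (A : 'M[F]_(3, m)) (i j k : 'I_m) : F :=
  \det (colsub (fun s : 'I_3 => if val s == 0%N then i
                               else if val s == 1%N then j else k) A).

(* A hyperplane of P(wedge^3 F^m) is given (up to scalar) by a nonzero
   coefficient vector c_{ijk}, i<j<k, w.r.t. the standard basis e_i^e_j^e_k. *)
Definition complex_coeff (F : fieldType) (m : nat) (c : 'I_m -> 'I_m -> 'I_m -> F) : Prop :=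
  exists i j k : 'I_m, (i < j < k)%N /\ c i j k != 0.

Definition in_complex (F : fieldType) (m : nat) (c : 'I_m -> 'I_m -> 'I_m -> F)
  (P : 'M[F]_m) : Prop :=
  \rank P = 3%N /\
  exists A : 'M[F]_(3, m), [/\ (A == P)%MS, row_free A &
    \sum_(i < m) \sum_(j < m) \sum_(k < m | (i < j < k)%N) c i j k * plucker A i j k = 0].

Definition singular_line (F : fieldType) (m : nat) (c : 'I_m -> 'I_m -> 'I_m -> F)
  (l : 'M[F]_m) : Prop :=
  \rank l = 2%N /\
  forall P : 'M[F]_m, \rank P = 3%N -> (l <= P)%MS -> in_complex c P.

Definition is_polar (F : fieldType) (m : nat) (c : 'I_m -> 'I_m -> 'I_m -> F)
  (l E : 'M[F]_m) : Prop :=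
  \rank E = m.-1 /\
  forall P : 'M[F]_m, \rank P = 3%N -> (l <= P)%MS -> (in_complex c P <-> (P <= E)%MS).

Definition line_spread (F : fieldType) (m : nat) (S : 'M[F]_m -> Prop) (H : 'M[F]_m) : Prop :=
  [/\ (forall l, S l -> \rank l = 2%N /\ (l <= H)%MS),
      (forall p : 'M[F]_m, \rank p = 1%N -> (p <= H)%MS -> exists l, S l /\ (p <= l)%MS) &
      (forall p l1 l2 : 'M[F]_m, \rank p = 1%N -> S l1 -> S l2 ->
          (p <= l1)%MS -> (p <= l2)%MS -> (l1 == l2)%MS)].

(* Fixing a point a in the trilinear form omega of the complex gives an
   alternating bilinear form (y, x) |-> omega(a, y, x), and the absence of
   singular lines says precisely that its radical is the point a itself. An
   alternating form has even rank, and this one has rank n, so n is even.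
   The polar hyperplane of the line <a, b> is the kernel of the functional
   x |-> omega(a, b, x); as b varies these functionals fill the annihilator of
   a, and two of them have the same kernel only if the lines coincide. So every
   hyperplane through a is the polar of exactly one line through a, and that
   line lies in it. *)
From mathcomp Require Import all_boot all_order all_algebra ring zify.
Set Implicit Arguments. Unset Strict Implicit. Unset Printing Implicit Defensive.
Import GRing.Theory.
Local Open Scope ring_scope.

Lemma mx11_eq0 (F : fieldType) (A : 'M[F]_1) : (A == 0) = (A 0 0 == 0).
Proof.
apply/eqP/eqP => [-> | A0]; first by rewrite mxE.
by apply/matrixP => i j; rewrite !ord1 A0 mxE.
Qed.

Section SubspaceFacts.
Variables (F : fieldType) (m : nat).
Implicit Types (u v x y a b : 'rV[F]_m).

Lemma mxrank_adds_rV p (A : 'M[F]_(p, m)) x :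
  ~~ (x <= A)%MS -> \rank (A + x)%MS = (\rank A).+1.
Proof.
move=> nxA; apply/eqP; rewrite eqn_leq; apply/andP; split.
  by have [+ _] := mxrank_adds_leqif A x; have := rank_leq_row x; lia.
by rewrite (ltn_leqif (mxrank_leqif_sup (addsmxSl A x))) addsmx_sub submx_refl.
Qed.

Lemma exists_rV_notsub p q (L : 'M[F]_(p, m)) (P : 'M[F]_(q, m)) :
  (\rank L < \rank P)%N -> exists2 x : 'rV[F]_m, (x <= P)%MS & ~~ (x <= L)%MS.
Proof.
move=> ltLP; have /row_subPn[i Li] : ~~ (P <= L)%MS.
  by apply/negP => /mxrankS; rewrite leqNgt ltLP.
by exists (row i P); rewrite ?row_sub.
Qed.

Lemma sub_rank_eqmx p q (A : 'M[F]_(p, m)) (B : 'M[F]_(q, m)) :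
  (A <= B)%MS -> (\rank B <= \rank A)%N -> (B <= A)%MS.
Proof. by move=> sAB leBA; rewrite -(mxrank_leqif_sup sAB).2 eqn_leq mxrankS. Qed.

Lemma nonzero_rV_sub p (A : 'M[F]_(p, m)) :
  A != 0 -> exists2 a : 'rV[F]_m, a != 0 & (a <= A)%MS.
Proof.
by rewrite -submx0 => /row_subPn[i Ai]; exists (row i A); rewrite ?row_sub // -submx0.
Qed.

Lemma point_rV (p : 'M[F]_m) :
  \rank p = 1%N -> exists2 a : 'rV[F]_m, a != 0 & (p == a)%MS.
Proof.
move=> rp; have [|a a_n0 ap] := nonzero_rV_sub (A := p); first by rewrite -mxrank_eq0 rp.
by exists a; rewrite // ap sub_rank_eqmx // rank_rV a_n0 rp.
Qed.

Lemma line_rV (l : 'M[F]_m) a : \rank l = 2%N -> a != 0 -> (a <= l)%MS ->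
  exists2 b : 'rV[F]_m, ~~ (b <= a)%MS & (l == a + b)%MS.
Proof.
move=> rl a_n0 al; have [|b bl nba] := exists_rV_notsub (L := a) (P := l).
  by rewrite rl rank_rV a_n0.
have abl : (a + b <= l)%MS by rewrite addsmx_sub al.
exists b; rewrite // abl sub_rank_eqmx //.
by rewrite mxrank_adds_rV // rank_rV a_n0 rl.
Qed.

Lemma rV_linear_expand (f : 'rV[F]_m -> F) :
  (forall k x y, f (k *: x + y) = k * f x + f y) ->
  forall x, f x = \sum_q x 0 q * f (delta_mx 0 q).
Proof.
move=> f_lin x; have f0 : f 0 = 0.
  by have /eqP := f_lin 1 0 0; rewrite scaler0 addr0 mul1r -subr_eq subrr eq_sym => /eqP.
have fD : {morph f : y z / y + z}.
  by move=> y z; rewrite -[in LHS](scale1r y) f_lin mul1r.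
rewrite {1}(row_sum_delta x) (big_morph f fD f0).
by apply: eq_bigr => q _; rewrite -[_ *: _]addr0 f_lin f0 addr0.
Qed.

Lemma rV_ker_sub u v : u != 0 ->
  (forall x, x *m u^T == 0 -> x *m v^T == 0) -> (v <= u)%MS.
Proof.
move=> u_n0 ker_uv; apply: contraT => nvu.
pose M := col_mx u v.
have rM : \rank M = 2%N.
  have /eqmx_rank-> : (M == u + v)%MS by apply/eqmxP/eqmx_sym/addsmxE.
  by rewrite mxrank_adds_rV // rank_rV u_n0.
have [|x xu xM] := exists_rV_notsub (L := kermx M^T) (P := kermx u^T).
  rewrite !mxrank_ker !mxrank_tr rM rank_rV u_n0.
  by have := rank_leq_col M; rewrite rM; lia.
move: xu xM; rewrite !sub_kermx tr_col_mx mul_mx_row => xu.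
by rewrite (eqP xu) (eqP (ker_uv x xu)) row_mx0 eqxx.
Qed.

Lemma hyperplane_kermx (H : 'M[F]_m) : (0 < m)%N -> \rank H = m.-1 ->
  exists2 h : 'rV[F]_m, h != 0 & forall x, (x <= H)%MS = (x *m h^T == 0).
Proof.
move=> m_gt0 rH; have [|h h_n0 hK] := nonzero_rV_sub (A := kermx H^T).
  by rewrite -mxrank_eq0 mxrank_ker mxrank_tr rH; lia.
exists h => // x; rewrite -sub_kermx.
have HK : (H <= kermx h^T)%MS.
  move: hK; rewrite !sub_kermx => /eqP hH.
  by rewrite -[H *m _]trmxK trmx_mul trmxK hH trmx0.
have KH : (kermx h^T <= H)%MS.
  by rewrite sub_rank_eqmx // mxrank_ker mxrank_tr rank_rV h_n0 rH subn1.
by apply/idP/idP => sx; [exact: submx_trans sx HK | exact: submx_trans sx KH].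
Qed.

Lemma plane_through_line a b (P : 'M[F]_m) :
  \rank (a + b)%MS = 2%N -> \rank P = 3%N -> (a + b <= P)%MS ->
  exists2 x : 'rV[F]_m, \rank (a + b + x)%MS = 3%N & (P == a + b + x)%MS.
Proof.
move=> rab rP abP; have [|x xP xab] := exists_rV_notsub (L := (a + b)%MS) (P := P).
  by rewrite rab rP.
have r3 : \rank (a + b + x)%MS = 3%N by rewrite mxrank_adds_rV // rab.
have abxP : (a + b + x <= P)%MS by rewrite addsmx_sub abP.
by exists x; rewrite // abxP sub_rank_eqmx // r3 rP.
Qed.

End SubspaceFacts.

Section AlternatingForm.
Variables (F : fieldType) (m : nat) (G : 'M[F]_m).
Implicit Types (u v w x y z : 'rV[F]_m) (W : 'M[F]_m).

Definition bform y x : F := (y *m G *m x^T) 0 0.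

Definition orthmx p x (U : 'M[F]_(p, m)) := x *m G *m U^T == 0.

Lemma bformDl x y z : bform (x + y) z = bform x z + bform y z.
Proof. by rewrite /bform !mulmxDl mxE. Qed.

Lemma bformZl k x z : bform (k *: x) z = k * bform x z.
Proof. by rewrite /bform -!scalemxAl mxE. Qed.

Lemma bformNl x z : bform (- x) z = - bform x z.
Proof. by rewrite -scaleN1r bformZl mulN1r. Qed.

Lemma bformDr x y z : bform z (x + y) = bform z x + bform z y.
Proof. by rewrite /bform linearD /= mulmxDr mxE. Qed.

Lemma bformZr k x z : bform z (k *: x) = k * bform z x.
Proof. by rewrite /bform linearZ /= -scalemxAr mxE. Qed.

Lemma bform_mxE p q (U : 'M[F]_(p, m)) (V : 'M[F]_(q, m)) i j :
  (U *m G *m V^T) i j = bform (row i U) (row j V).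
Proof.
rewrite /bform !mxE; apply: eq_bigr => k _; rewrite !mxE; congr (_ * _).
by apply: eq_bigr => l _; rewrite !mxE.
Qed.

Lemma orthmx_rV x y : orthmx x y = (bform x y == 0).
Proof.
rewrite /orthmx /bform; apply/eqP/eqP => [-> | xy0]; first by rewrite mxE.
by apply/matrixP => i j; rewrite !ord1 xy0 mxE.
Qed.

Lemma orthmx_sub p q x (U : 'M[F]_(p, m)) (V : 'M[F]_(q, m)) :
  orthmx x U -> (V <= U)%MS -> orthmx x V.
Proof. by move=> xU /submxP[D ->]; rewrite /orthmx trmx_mul mulmxA (eqP xU) mul0mx. Qed.

Lemma orthmx_adds p q x (U : 'M[F]_(p, m)) (V : 'M[F]_(q, m)) :
  orthmx x (U + V)%MS = orthmx x U && orthmx x V.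
Proof.
apply/idP/andP => [xUV | [xU xV]].
  by split; apply: orthmx_sub xUV _; rewrite ?addsmxSl ?addsmxSr.
apply: (@orthmx_sub _ _ _ (col_mx U V)); last by rewrite addsmxE.
by rewrite /orthmx tr_col_mx mul_mx_row row_mx_eq0; apply/andP.
Qed.

Hypothesis bform_alt : forall x, bform x x = 0.

Lemma bform_skew x y : bform x y = - bform y x.
Proof.
apply/eqP; rewrite -addr_eq0; have := bform_alt (x + y).
by rewrite bformDl !bformDr !bform_alt add0r addr0 => ->.
Qed.

Lemma alternating_trmx : G^T = - G.
Proof.
have GE k l : G k l = bform (row k 1%:M) (row l 1%:M).
  by rewrite -bform_mxE trmx1 mulmx1 mul1mx.
by apply/matrixP => i j; rewrite !mxE !GE bform_skew.
Qed.

Lemma hyperbolic_pair W : W *m G *m W^T != 0 ->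
  exists u v, [/\ (u <= W)%MS, (v <= W)%MS & bform u v = 1].
Proof.
move=> WGW; have /existsP[i /existsP[j]] : [exists i, exists j, (W *m G *m W^T) i j != 0].
  apply: contraR WGW => /existsPn WGW0; apply/eqP/matrixP => i j; rewrite [RHS]mxE.
  by have /existsPn/(_ j) := WGW0 i; rewrite negbK => /eqP.
rewrite bform_mxE => uv_n0.
exists (row i W), ((bform (row i W) (row j W))^-1 *: row j W).
by rewrite !row_sub scalemx_sub ?row_sub // bformZr mulVf.
Qed.

Section HyperbolicPair.
Variables u v : 'rV[F]_m.
Hypothesis uv1 : bform u v = 1.

Lemma hyperbolic_vu : bform v u = -1.
Proof. by rewrite bform_skew uv1. Qed.

Lemma hyperbolic_rank : \rank (u + v)%MS = 2%N.
Proof.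
have u_n0 : u != 0.
  apply/eqP => u0; move: uv1; rewrite u0 /bform !mul0mx mxE => /eqP.
  by rewrite eq_sym oner_eq0.
rewrite mxrank_adds_rV ?rank_rV ?u_n0 //; apply/negP => /sub_rVP[k vk].
by move: uv1; rewrite vk bformZr bform_alt mulr0 => /eqP; rewrite eq_sym oner_eq0.
Qed.

Lemma hyperbolic_anisotropic y :
  (y <= u + v)%MS -> bform y u = 0 -> bform y v = 0 -> y = 0.
Proof.
case/sub_addsmxP => pq ->; rewrite (mx11_scalar pq.1) (mx11_scalar pq.2) !mul_scalar_mx.
rewrite !bformDl !bformZl !bform_alt hyperbolic_vu uv1 !mulr0 mulr1 mulrN1 add0r addr0.
by move=> /eqP; rewrite oppr_eq0 => /eqP-> ->; rewrite !scale0r addr0.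
Qed.

End HyperbolicPair.

Lemma alternating_split W : W *m G *m W^T != 0 ->
  exists W' : 'M[F]_m, [/\ (W' <= W)%MS, (\rank W' + 2 = \rank W)%N &
    forall w, (w <= W')%MS -> orthmx w W' -> orthmx w W].
Proof.
move=> /hyperbolic_pair[u [v [uW vW uv1]]].
pose K := kermx (G *m (u + v)%MS^T).
have inK x : (x <= K)%MS = (bform x u == 0) && (bform x v == 0).
  by rewrite sub_kermx mulmxA -/(orthmx x _) orthmx_adds !orthmx_rV.
pose W' := (W :&: K)%MS.
have W'W : (W' <= W)%MS := capmxSl W K.
have sWW' : (W <= W' + (u + v))%MS.
  apply/row_subP => r; set x := row r W.
  set y := bform x v *: u - bform x u *: v.
  have yuv : (y <= u + v)%MS.
    by rewrite addmx_sub ?eqmx_opp ?scalemx_sub ?addsmxSl ?addsmxSr.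
  have xyW' : (x - y <= W')%MS.
    rewrite sub_capmx inK addmx_sub ?row_sub ?eqmx_opp ?(submx_trans yuv) ?addsmx_sub ?uW //=.
    rewrite !(bformDl, bformNl, bformZl) !bform_alt uv1 (hyperbolic_vu uv1).
    by rewrite !(mulr0, mulr1, mulrN1, opprK, add0r, subr0, subrr) eqxx.
  by rewrite -(subrK y x) addmx_sub_adds.
have W'uv0 : (W' :&: (u + v))%MS = 0.
  apply/eqP; rewrite -submx0; apply/rV_subP => y; rewrite !sub_capmx inK submx0.
  by case/andP=> /and3P[_ /eqP yu /eqP yv] yuv; rewrite (hyperbolic_anisotropic uv1 yuv yu yv).
have eqW : (W == W' + (u + v))%MS by rewrite sWW' addsmx_sub W'W addsmx_sub uW.
exists W'; split=> //.
  by rewrite (eqmx_rank eqW) mxrank_disjoint_sum // hyperbolic_rank.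
move=> w wW' wW'orth; apply: orthmx_sub sWW'.
rewrite orthmx_adds wW'orth orthmx_adds !orthmx_rV -inK.
exact: submx_trans wW' (capmxSr W K).
Qed.

Lemma isotropic_radical W : W *m G *m W^T = 0 -> W != 0 ->
  exists w, [/\ w != 0, (w <= W)%MS & orthmx w W].
Proof.
move=> WGW0; rewrite -submx0 => /row_subPn[i Wi]; exists (row i W).
by rewrite -submx0 row_sub /orthmx -!row_mul WGW0 row0.
Qed.

Lemma odd_rank_radical k W : \rank W = k.*2.+1 ->
  exists w, [/\ w != 0, (w <= W)%MS & orthmx w W].
Proof.
elim: k W => [|k IHk] W rW;
  have [WGW0|/alternating_split[W' [W'W rW' W'rad]]] := eqVneq (W *m G *m W^T) 0.
1,3: by apply: isotropic_radical WGW0 _; rewrite -mxrank_eq0 rW.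
  by move: rW'; rewrite rW; lia.
have [|w [w_n0 wW' ww']] := IHk W'; first by move: rW'; rewrite rW doubleS; lia.
by exists w; split; rewrite ?(submx_trans wW') ?W'rad.
Qed.

(* A vector of R^C orthogonal to R^C is, by skew-symmetry, also orthogonal to
   the radical R, hence to everything; so it lies in R :&: R^C = 0. *)
Lemma alternating_rank_even : ~~ odd (\rank G).
Proof.
apply/negP => oddG; pose R := kermx G.
have rRC : \rank R^C = (\rank G)./2.*2.+1.
  rewrite mxrank_compl mxrank_ker subKn ?rank_leq_row //.
  by rewrite -{1}(odd_double_half (\rank G)) oddG.
have [w [w_n0 wRC wRC']] := odd_rank_radical rRC.
have wR : orthmx w R.
  rewrite /orthmx -mulmxA -[G *m _]trmxK trmx_mul trmxK alternating_trmx.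
  by rewrite mulmxN mulmx_ker oppr0 trmx0 mulmx0.
have : orthmx w 1%:M.
  apply: (@orthmx_sub _ _ _ (R + R^C)%MS); first by rewrite orthmx_adds wR.
  by rewrite sub1mx addsmx_compl_full.
rewrite /orthmx trmx1 mulmx1 -sub_kermx => wR'.
have : (w <= R :&: R^C)%MS by rewrite sub_capmx wR'.
by rewrite capmx_compl submx0 (negPf w_n0).
Qed.

End AlternatingForm.

Section LinearComplex.
Variables (F : fieldType) (m : nat) (c : 'I_m -> 'I_m -> 'I_m -> F).
Implicit Types (a b x y : 'rV[F]_m).

Definition complex_form (A : 'M[F]_(3, m)) : F :=
  \sum_(i < m) \sum_(j < m) \sum_(k < m | (i < j < k)%N) c i j k * plucker A i j k.

Lemma complex_formM (M : 'M[F]_3) (A : 'M[F]_(3, m)) :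
  complex_form (M *m A) = \det M * complex_form A.
Proof.
have colsubM f : colsub f (M *m A) = M *m colsub f A.
  by apply/matrixP => p q; rewrite !mxE; apply: eq_bigr => r _; rewrite !mxE.
rewrite /complex_form big_distrr; apply: eq_bigr => i _.
rewrite big_distrr; apply: eq_bigr => j _; rewrite big_distrr; apply: eq_bigr => k _.
by rewrite /plucker colsubM det_mulmx mulrCA.
Qed.

Lemma complex_form_lin k (A B C : 'M[F]_(3, m)) :
  (forall i j l, plucker C i j l = k * plucker A i j l + plucker B i j l) ->
  complex_form C = k * complex_form A + complex_form B.
Proof.
move=> plC; rewrite /complex_form big_distrr -big_split; apply: eq_bigr => i _.
rewrite big_distrr -big_split; apply: eq_bigr => j _.
rewrite big_distrr -big_split; apply: eq_bigr => l _.
by rewrite plC mulrDr mulrCA.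
Qed.

Lemma complex_form_eq0 (A : 'M[F]_(3, m)) :
  (forall i j l, plucker A i j l = 0) -> complex_form A = 0.
Proof.
move=> plA0; rewrite /complex_form big1 // => i _; rewrite big1 // => j _.
by rewrite big1 // => l _; rewrite plA0 mulr0.
Qed.

Definition row3_mx a b x : 'M[F]_(3, m) := \matrix_(r < 3) [:: a; b; x]`_r.

Lemma plucker_row3 a b x i j k :
  plucker (row3_mx a b x) i j k =
    a 0 i * (b 0 j * x 0 k - b 0 k * x 0 j) - a 0 j * (b 0 i * x 0 k - b 0 k * x 0 i)
    + a 0 k * (b 0 i * x 0 j - b 0 j * x 0 i).
Proof.
rewrite /plucker (expand_det_row _ 0) !big_ord_recl big_ord0 /cofactor.
rewrite !(expand_det_row _ 0) !big_ord_recl !big_ord0 /cofactor.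
by rewrite !det_mx11 !mxE /=; ring.
Qed.

Lemma row3_mx_eqmx a b x : (row3_mx a b x == a + b + x)%MS.
Proof.
apply/andP; split.
  apply/row_subP => r; rewrite rowK.
  case: r => [[|[|[|]]]] //= _; rewrite ?addsmxSr //.
  1,2: by rewrite (submx_trans _ (addsmxSl _ x)) ?addsmxSl ?addsmxSr.
rewrite !addsmx_sub -andbA; apply/and3P; split;
  [apply: (@eq_row_sub _ _ _ _ _ 0) | apply: (@eq_row_sub _ _ _ _ _ 1) |
   apply: (@eq_row_sub _ _ _ _ _ 2)]; exact: rowK.
Qed.

Definition omega a b x : F := complex_form (row3_mx a b x).

Lemma omega_linear2 a z k x y :
  omega a (k *: x + y) z = k * omega a x z + omega a y z.
Proof. by apply: complex_form_lin => i j l; rewrite !plucker_row3 !mxE; ring. Qed.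

Lemma omega_linear3 a b k x y :
  omega a b (k *: x + y) = k * omega a b x + omega a b y.
Proof. by apply: complex_form_lin => i j l; rewrite !plucker_row3 !mxE; ring. Qed.

Lemma omega_xx a x : omega a x x = 0.
Proof. by apply: complex_form_eq0 => i j l; rewrite plucker_row3; ring. Qed.

Lemma omega_aa a x : omega a a x = 0.
Proof. by apply: complex_form_eq0 => i j l; rewrite plucker_row3; ring. Qed.

Definition gram a : 'M[F]_m := \matrix_(p, q) omega a (delta_mx 0 p) (delta_mx 0 q).

Lemma omega_gram a y x : omega a y x = bform (gram a) y x.
Proof.
rewrite (rV_linear_expand (omega_linear3 a y)) /bform !mxE; apply: eq_bigr => q _.
rewrite !mxE mulrC; congr (_ * _).
rewrite (rV_linear_expand (f := omega a ^~ (delta_mx 0 q)) (omega_linear2 a _)).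
by apply: eq_bigr => p _; rewrite !mxE.
Qed.

Lemma gram_alt a x : bform (gram a) x x = 0.
Proof. by rewrite -omega_gram omega_xx. Qed.

Lemma omega_functional a b x : omega a b x = (x *m (b *m gram a)^T) 0 0.
Proof. by rewrite omega_gram /bform -[in LHS](trmxK (b *m _ *m _)) trmx_mul trmxK mxE. Qed.

Lemma omega_span a b y : (y <= a + b)%MS -> omega a b y = 0.
Proof.
case/sub_addsmxP => pq ->; rewrite (mx11_scalar pq.1) (mx11_scalar pq.2) !mul_scalar_mx.
rewrite !omega_gram bformDr !bformZr gram_alt (bform_skew (gram_alt a)) -omega_gram.
by rewrite omega_aa oppr0 !mulr0 addr0.
Qed.

Lemma in_complex_row3 a b x (P : 'M[F]_m) :
  \rank (a + b + x)%MS = 3%N -> (P == a + b + x)%MS ->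
  (in_complex c P <-> omega a b x = 0).
Proof.
move=> r3 PE; set R := row3_mx a b x.
have /andP[RP PR] : (R == P)%MS.
  by apply/eqmxP; apply: eqmx_trans (eqmxP (row3_mx_eqmx a b x)) (eqmx_sym (eqmxP PE)).
have rR : \rank R = 3%N by rewrite (eqmx_rank (row3_mx_eqmx a b x)).
split=> [[_ [A [/andP[AP _] freeA A0]]] | R0].
  have AE : A *m pinvmx R *m R = A by apply: mulmxKpV; apply: submx_trans AP PR.
  have detM : \det (A *m pinvmx R) != 0.
    rewrite -unitfE -unitmxE -row_free_unit /row_free eqn_leq rank_leq_row /=.
    by rewrite -{1}(eqP freeA) -{1}AE mxrankM_maxl.
  move: A0; rewrite -/(complex_form A) -AE complex_formM => /eqP.
  by rewrite mulf_eq0 (negPf detM) => /eqP.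
split; first by rewrite (eqmx_rank PE).
by exists R; rewrite /row_free rR RP PR.
Qed.

Lemma is_polar_omega a b (l E : 'M[F]_m) :
  (3 < m)%N -> \rank (a + b)%MS = 2%N -> (l == a + b)%MS -> \rank E = m.-1 ->
  (is_polar c l E <-> forall x, (x <= E)%MS = (omega a b x == 0)).
Proof.
move=> m_gt3 rab /eqmxP lab rE.
have r3 x : ~~ (x <= a + b)%MS -> \rank (a + b + x)%MS = 3%N.
  by move=> xab; rewrite mxrank_adds_rV // rab.
have complexE x : ~~ (x <= a + b)%MS ->
    in_complex c (a + b + x)%MS <-> omega a b x = 0.
  by move=> xab; apply: in_complex_row3 (r3 x xab) _; rewrite submx_refl.
split=> [[_ polE] | omegaE].
  have [x0 x0ab x00] : exists2 x0, ~~ (x0 <= a + b)%MS & omega a b x0 = 0.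
    have [|x xK xab] := exists_rV_notsub (L := (a + b)%MS) (P := kermx (b *m gram a)^T).
      by rewrite rab mxrank_ker mxrank_tr; have := rank_leq_row (b *m gram a); lia.
    by exists x; rewrite // omega_functional (sub_kermxP xK) mxE.
  have polE' x : ~~ (x <= a + b)%MS -> in_complex c (a + b + x)%MS <-> (a + b + x <= E)%MS.
    by move=> xab; apply: polE; rewrite ?r3 // lab addsmxSl.
  have abE : (a + b <= E)%MS.
    by have /(polE' _ x0ab) := (complexE _ x0ab).2 x00; rewrite addsmx_sub => /andP[].
  move=> x; have [xab | xab] := boolP (x <= a + b)%MS.
    by rewrite (submx_trans xab abE) omega_span ?eqxx.
  apply/idP/eqP => [xE | omega_x0].
    by apply/(complexE _ xab)/(polE' _ xab); rewrite addsmx_sub abE.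
  by have /(polE' _ xab) := (complexE _ xab).2 omega_x0; rewrite addsmx_sub abE.
split=> // P rP lP.
have abP : (a + b <= P)%MS by rewrite -lab.
have [x r3x PE] := plane_through_line rab rP abP.
rewrite (in_complex_row3 r3x PE) (eqmxP PE) !addsmx_sub !omegaE.
rewrite (omega_span (addsmxSl a b)) (omega_span (addsmxSr a b)) eqxx /=.
by split=> /eqP.
Qed.

Lemma polar_line_sub (l H : 'M[F]_m) :
  (3 < m)%N -> \rank H = m.-1 -> \rank l = 2%N -> is_polar c l H -> (l <= H)%MS.
Proof.
move=> m_gt3 rH rl polH; have [|a a_n0 al] := nonzero_rV_sub (A := l).
  by rewrite -mxrank_eq0 rl.
have [b ba lab] := line_rV rl a_n0 al.
have rab : \rank (a + b)%MS = 2%N by rewrite -(eqmx_rank lab).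
have omegaE := (is_polar_omega m_gt3 rab lab rH).1 polH.
rewrite (eqmxP lab) addsmx_sub !omegaE.
by rewrite (omega_span (addsmxSl a b)) (omega_span (addsmxSr a b)) eqxx.
Qed.

End LinearComplex.

Section NoSingularLine.
Variables (F : fieldType) (m : nat) (c : 'I_m -> 'I_m -> 'I_m -> F).
Hypothesis no_singular : forall l : 'M[F]_m, ~ singular_line c l.
Implicit Types (a b x y : 'rV[F]_m).

Lemma gram_mul a : a *m gram c a = 0.
Proof.
apply/rowP => j; rewrite [RHS]mxE -[a *m _]mulmx1 -trmx1 bform_mxE row_id.
by rewrite -omega_gram omega_aa.
Qed.

Lemma gram_rad a y : a != 0 -> y *m gram c a = 0 -> (y <= a)%MS.
Proof.
move=> a_n0 yG0; have [// | nya] := boolP (y <= a)%MS; exfalso.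
have ray : \rank (a + y)%MS = 2%N by rewrite mxrank_adds_rV // rank_rV a_n0.
apply: (no_singular (l := (a + y)%MS)); split=> // P rP ayP.
have [x r3 PE] := plane_through_line ray rP ayP.
by apply/(in_complex_row3 c r3 PE); rewrite omega_gram /bform yG0 !mul0mx mxE.
Qed.

Lemma gram_kermx a : a != 0 -> (kermx (gram c a) == a)%MS.
Proof.
move=> a_n0; rewrite sub_kermx gram_mul eqxx andbT.
by apply/row_subP => i; apply: gram_rad; rewrite // -row_mul mulmx_ker row0.
Qed.

Lemma rank_gram a : a != 0 -> \rank (gram c a) = m.-1.
Proof.
move=> a_n0; have := eqmx_rank (gram_kermx a_n0).
by rewrite mxrank_ker rank_rV a_n0; have := rank_leq_row (gram c a); lia.
Qed.

Lemma gram_eqmx_ker a : a != 0 -> (gram c a == kermx a^T)%MS.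
Proof.
move=> a_n0; have Gker : (gram c a <= kermx a^T)%MS.
  rewrite sub_kermx -[gram c a]opprK -(alternating_trmx (gram_alt c a)) mulNmx.
  by rewrite -trmx_mul gram_mul trmx0 oppr0.
by rewrite Gker sub_rank_eqmx // mxrank_ker mxrank_tr rank_rV a_n0 rank_gram // subn1.
Qed.

Lemma no_singular_dim_even : (0 < m)%N -> ~~ odd m.-1.
Proof.
move=> m_gt0; pose a : 'rV[F]_m := delta_mx 0 (Ordinal m_gt0).
have a_n0 : a != 0 by rewrite -mxrank_eq0 mxrank_delta.
by rewrite -(rank_gram a_n0) alternating_rank_even // => x; apply: gram_alt.
Qed.

Variable H : 'M[F]_m.
Hypotheses (m_gt3 : (3 < m)%N) (rH : \rank H = m.-1).

Lemma polar_line_exists (p : 'M[F]_m) : \rank p = 1%N -> (p <= H)%MS ->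
  exists l : 'M[F]_m, [/\ \rank l = 2%N, is_polar c l H & (p <= l)%MS].
Proof.
move=> rp pH; have [a a_n0 /eqmxP pa] := point_rV rp.
have [|h h_n0 Hh] := hyperplane_kermx _ rH; first by lia.
have ha : (h <= kermx a^T)%MS.
  move: pH; rewrite pa Hh sub_kermx => /eqP ah.
  by rewrite -[h *m _]trmxK trmx_mul trmxK ah trmx0.
have /submxP[b hb] : (h <= gram c a)%MS by rewrite (eqmxP (gram_eqmx_ker a_n0)).
have ba : ~~ (b <= a)%MS.
  by apply: contra h_n0; rewrite hb => /sub_rVP[k ->]; rewrite -scalemxAl gram_mul scaler0.
have rab : \rank (a + b)%MS = 2%N by rewrite mxrank_adds_rV // rank_rV a_n0.
exists (a + b)%MS; split=> //; last by rewrite pa addsmxSl.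
apply/(is_polar_omega c m_gt3 rab _ rH) => [|x]; first by rewrite submx_refl.
by rewrite Hh omega_functional -hb mx11_eq0.
Qed.

Lemma polar_line_unique (p l1 l2 : 'M[F]_m) :
  \rank p = 1%N -> \rank l1 = 2%N -> \rank l2 = 2%N ->
  is_polar c l1 H -> is_polar c l2 H -> (p <= l1)%MS -> (p <= l2)%MS -> (l1 == l2)%MS.
Proof.
move=> rp rl1 rl2 pol1 pol2 pl1 pl2; have [a a_n0 /eqmxP pa] := point_rV rp.
have al1 : (a <= l1)%MS by rewrite -pa.
have al2 : (a <= l2)%MS by rewrite -pa.
have [b1 b1a lab1] := line_rV rl1 a_n0 al1.
have [b2 b2a lab2] := line_rV rl2 a_n0 al2.
have rab1 : \rank (a + b1)%MS = 2%N by rewrite -(eqmx_rank lab1).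
have rab2 : \rank (a + b2)%MS = 2%N by rewrite -(eqmx_rank lab2).
have omegaE1 := (is_polar_omega c m_gt3 rab1 lab1 rH).1 pol1.
have omegaE2 := (is_polar_omega c m_gt3 rab2 lab2 rH).1 pol2.
have b1G : b1 *m gram c a != 0 by apply: contra b1a => /eqP; apply: gram_rad.
have /sub_rVP[k b2G] : (b2 *m gram c a <= b1 *m gram c a)%MS.
  apply: rV_ker_sub b1G _ => x.
  by rewrite !mx11_eq0 -!omega_functional -omegaE1 -omegaE2.
have b2ab1 : (b2 <= a + b1)%MS.
  have : (b2 - k *: b1 <= a)%MS.
    by apply: gram_rad; rewrite // mulmxBl -scalemxAl b2G subrr.
  by move=> dba; rewrite -(subrK (k *: b1) b2) addmx_sub_adds // scalemx_sub.
have ab21 : (a + b2 <= a + b1)%MS by rewrite addsmx_sub addsmxSl.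
have ab12 : (a + b1 <= a + b2)%MS by rewrite sub_rank_eqmx // rab1 rab2.
by apply/andP; split; rewrite (eqmxP lab1) (eqmxP lab2).
Qed.

End NoSingularLine.

Theorem proposition6p5 (F : fieldType) (n : nat)
  (c : 'I_n.+1 -> 'I_n.+1 -> 'I_n.+1 -> F) :
  (3 <= n)%N ->
  complex_coeff c ->
  (forall l : 'M[F]_n.+1, ~ singular_line c l) ->
  ~~ odd n /\
  (forall H : 'M[F]_n.+1, \rank H = n ->
     line_spread (fun l => \rank l = 2%N /\ is_polar c l H) H).
Proof.
move=> n_ge3 _ no_singular; have m_gt3 : (3 < n.+1)%N := n_ge3.
split; first exact: (no_singular_dim_even no_singular).
move=> H rH; split.
- by move=> l [rl polH]; rewrite rl (polar_line_sub m_gt3 rH rl polH).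
- move=> p rp pH; have [l [rl polH pl]] := polar_line_exists no_singular m_gt3 rH rp pH.
  by exists l.
- move=> p l1 l2 rp [rl1 pol1] [rl2 pol2].
  exact: (polar_line_unique no_singular m_gt3 rH rp rl1 rl2 pol1 pol2).
Qed.
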